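(* Let $P$ be a poset. If $P$ is well-quasi-ordered and the set $\mathcal{J}^{\neg\downarrow}(P)$ of non-principal ideals of $P$ is finite, then $P$ is better-quasi-ordered.
   Context: An ideal of $P$ is a nonempty initial segment of $P$ which is up-directed (any two elements have an upper bound in it); it is principal if it has a largest element. A quasi-ordered set is well-quasi-ordered (wqo) if it is well-founded and has no infinite antichain. Barriers and bqo: finite subsets of $\mathbb{N}$ are identified with their increasing enumerations. For finite $s,t\subseteq\mathbb{N}$ write $s\triangleleft t$ if there is a finite $r\subseteq\mathbb{N}$ such that $s$ is a proper initial segment of $r$ and $t$ is $r$ with its least element removed. A barrier is an infinite set $B$ of finite subsets of $\mathbb{N}$, no member of which is a proper subset of another, such that every infinite $X\subseteq\bigcup B$ has a nonempty initial segment belonging to $B$. A barrier is well-ordered by the lexicographic order; its order type is the type of this well-order. A map $f$ from a barrier $B$ into a quasi-ordered set $Q$ is good if there exist $s,t\in B$ with $s\triangleleft t$ and $f(s)\leq f(t)$, and bad otherwise. For a countable ordinal $\alpha$, $Q$ is $\alpha$-bqo if every map from a barrier of order type at most $\alpha$ into $Q$ is good; $Q$ is better-quasi-ordered (bqo) if it is $\alpha$-bqo for every countable ordinal $\alpha$. *)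

From Stdlib Require Import List Arith Sorting.Sorted Relations Wellfounded.
Import ListNotations.

Section Orders.
Variable T : Type.
Variable le : T -> T -> Prop.

Definition is_poset : Prop :=
  (forall x, le x x) /\
  (forall x y z, le x y -> le y z -> le x z) /\
  (forall x y, le x y -> le y x -> x = y).

Definition strict (x y : T) : Prop := le x y /\ ~ le y x.

Definition wqo : Prop :=
  well_founded strict /\
  ~ (exists f : nat -> T, forall i j, i <> j -> ~ le (f i) (f j)).

Definition ideal (I : T -> Prop) : Prop :=
  (exists x, I x) /\
  (forall x y, le x y -> I y -> I x) /\
  (forall x y, I x -> I y -> exists z, I z /\ le x z /\ le y z).

Definition principal (I : T -> Prop) : Prop :=
  exists m, I m /\ forall x, I x -> le x m.

Definition finitely_many_nonprincipal_ideals : Prop :=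
  exists l : list (T -> Prop),
    forall I, ideal I -> ~ principal I ->
      exists J, In J l /\ forall x, I x <-> J x.
End Orders.

(** Finite subsets of N are identified with their increasing enumerations. *)
Definition fin_subset (s : list nat) : Prop := Sorted lt s.

Definition proper_prefix (s r : list nat) : Prop :=
  exists u, u <> [] /\ r = s ++ u.

Definition shift_rel (s t : list nat) : Prop :=
  exists r, fin_subset r /\ proper_prefix s r /\ t = tl r.

Definition initial_segment_of (s : list nat) (X : nat -> Prop) : Prop :=
  s <> [] /\ fin_subset s /\ (forall n, In n s -> X n) /\
  (forall n m, In m s -> X n -> n <= m -> In n s).

Definition infinite_nat_set (X : nat -> Prop) : Prop :=
  forall n, exists m, n <= m /\ X m.

Definition barrier (B : list nat -> Prop) : Prop :=
  (forall s, B s -> fin_subset s) /\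
  (~ exists l : list (list nat), forall s, B s -> In s l) /\
  (forall s t, B s -> B t -> incl s t -> s = t) /\
  (forall X : nat -> Prop, infinite_nat_set X ->
     (forall n, X n -> exists s, B s /\ In n s) ->
     exists s, B s /\ initial_segment_of s X).

Fixpoint lex_lt (s t : list nat) : Prop :=
  match s, t with
  | [], [] => False
  | [], _ :: _ => True
  | _ :: _, [] => False
  | a :: s', b :: t' => a < b \/ (a = b /\ lex_lt s' t')
  end.

(** A countable ordinal, presented as a countable strict well-order (A, ltA). *)
Definition countable_ordinal (A : Type) (ltA : A -> A -> Prop) : Prop :=
  (forall x, ~ ltA x x) /\
  (forall x y z, ltA x y -> ltA y z -> ltA x z) /\
  (forall x y, ltA x y \/ x = y \/ ltA y x) /\
  well_founded ltA /\
  (exists enc : A -> nat, forall x y, enc x = enc y -> x = y).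

(** The order type of the barrier B (lexicographic order) is at most that of
    the well-order (A, ltA): there is a strictly increasing map B -> A. *)
Definition barrier_type_le (B : list nat -> Prop) (A : Type) (ltA : A -> A -> Prop) : Prop :=
  exists g : list nat -> A, forall s t, B s -> B t -> lex_lt s t -> ltA (g s) (g t).

Definition good_map {Q : Type} (leQ : Q -> Q -> Prop) (B : list nat -> Prop)
    (f : list nat -> Q) : Prop :=
  exists s t, B s /\ B t /\ shift_rel s t /\ leQ (f s) (f t).

Definition alpha_bqo {Q : Type} (leQ : Q -> Q -> Prop) (A : Type) (ltA : A -> A -> Prop) : Prop :=
  forall B : list nat -> Prop, barrier B -> barrier_type_le B A ltA ->
  forall f : list nat -> Q, good_map leQ B f.

Definition bqo {Q : Type} (leQ : Q -> Q -> Prop) : Prop :=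
  forall (A : Type) (ltA : A -> A -> Prop), countable_ordinal A ltA -> alpha_bqo leQ A ltA.

From Stdlib Require Import List Arith Lia Sorting.Sorted Classical IndefiniteDescription.
Import ListNotations.

(* Let f be a bad map on a barrier B.  Strict inclusion of downsets of a wqo
   is well founded, so we may take a downset D minimal such that f sends the
   restriction B|Z of B to some infinite Z ⊆ ∪B into D, and derive a
   contradiction.  A downset of a wqo is a finite union of ideals, so by the
   Nash-Williams partition theorem f(B|Z') lies in one of them for some
   infinite Z' ⊆ Z; by minimality D is an ideal.
   If D has a largest element m, Nash-Williams again gives Z' with either
   f = m on B|Z' (then f is good: take s ◁ t in B|Z') or f(B|Z') ⊆ D \ {m}.
   If D is not principal, let K be the union of the finitely many
   non-principal ideals strictly inside D; it is a proper downset, so we may assume that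
   f(B|Z) avoids K.  For z ∈ D, the elements of D outside K and not above z
   form finitely many principal ideals, hence lie below a single w ∈ D.  Along
   a ◁-chain s_0 ◁ s_1 ◁ ... in B|Z starting at a fixed s_0, badness gives
   f(s_(j+1)) not above f(s_j), so by induction f(s_j) ≤ w_j for a sequence
   w_j ∈ D independent of the chain.  Every element of B|Z'' with Z'' the part
   of Z beyond s_0 is reached after |s_0| steps, so f(B|Z'') lies below
   w_|s_0| in D: a proper downset, since D is not principal. *)

(* An infinite subset of N is represented by its increasing enumeration, so
   [range_incl] is inclusion of subsets and [within Z s] says that the finite
   set [s] is contained in the set enumerated by [Z]. *)
Definition increasing (g : nat -> nat) : Prop := forall i, g i < g (S i).

Definition range_incl (N M : nat -> nat) : Prop := forall i, exists j, N i = M j.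

Definition prefix (g : nat -> nat) (k : nat) : list nat := map g (seq 0 k).

Definition shift (k : nat) (g : nat -> nat) : nat -> nat := fun i => g (k + i).

Lemma increasing_lt g : increasing g -> forall i j, i < j -> g i < g j.
Proof.
  intros Hg i j Hij. induction Hij as [|j _ IH]; [apply Hg|].
  specialize (Hg j). lia.
Qed.

Lemma increasing_le g : increasing g -> forall i j, i <= j -> g i <= g j.
Proof.
  intros Hg i j Hij. destruct (Nat.eq_dec i j) as [->|Hne]; [lia|].
  pose proof (increasing_lt g Hg i j). lia.
Qed.

Lemma increasing_lt_inv g : increasing g -> forall i j, g i < g j -> i < j.
Proof.
  intros Hg i j Hlt. destruct (le_lt_dec j i) as [Hji|]; [|lia].
  pose proof (increasing_le g Hg j i Hji). lia.
Qed.

Lemma increasing_ge_id g : increasing g -> forall i, i <= g i.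
Proof. intros Hg i; induction i; [lia|]. specialize (Hg i); lia. Qed.

Lemma increasing_shift k g : increasing g -> increasing (shift k g).
Proof. intros Hg i; unfold shift. rewrite <- plus_n_Sm. apply Hg. Qed.

Lemma range_incl_refl M : range_incl M M.
Proof. intro i; exists i; reflexivity. Qed.

Lemma range_incl_trans A B C : range_incl A B -> range_incl B C -> range_incl A C.
Proof.
  intros HAB HBC i. destruct (HAB i) as [j Hj]. destruct (HBC j) as [k Hk].
  exists k; congruence.
Qed.

Lemma range_incl_shift k M : range_incl (shift k M) M.
Proof. intro i; exists (k + i); reflexivity. Qed.

Lemma prefix_ext g h k : (forall i, g i = h i) -> prefix g k = prefix h k.
Proof. intro E. apply map_ext. exact E. Qed.

Lemma prefix_S g k : prefix g (S k) = g 0 :: prefix (shift 1 g) k.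
Proof. unfold prefix. simpl. rewrite <- seq_shift, map_map. reflexivity. Qed.

Lemma prefix_shift_S j g k : prefix (shift 1 (shift j g)) k = prefix (shift (S j) g) k.
Proof. apply prefix_ext. intro i. unfold shift. f_equal. lia. Qed.

Lemma length_prefix g k : length (prefix g k) = k.
Proof. unfold prefix; rewrite length_map, length_seq; reflexivity. Qed.

Lemma in_prefix g k x : In x (prefix g k) <-> exists i, i < k /\ x = g i.
Proof.
  unfold prefix. rewrite in_map_iff. split.
  - intros [i [<- Hi]]. apply in_seq in Hi. exists i; split; [lia|reflexivity].
  - intros [i [Hi ->]]. exists i; split; [reflexivity|]. apply in_seq; lia.
Qed.

Lemma prefix_incl g a b : a <= b -> incl (prefix g a) (prefix g b).
Proof.
  intros Hab x. rewrite !in_prefix. intros [i [Hi ->]]. exists i; split; [lia | reflexivity].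
Qed.

Lemma sorted_prefix g k : increasing g -> Sorted lt (prefix g k).
Proof.
  intro Hg. unfold prefix. generalize 0 as a.
  induction k as [|k IH]; intro a; simpl; constructor; [apply IH|].
  destruct k; simpl; constructor. apply Hg.
Qed.

Definition within (Z : nat -> nat) (s : list nat) : Prop :=
  exists W k, increasing W /\ range_incl W Z /\ s = prefix W k.

Lemma within_prefix Z W k : increasing W -> range_incl W Z -> within Z (prefix W k).
Proof. intros HW HWZ. exists W, k. split; [exact HW | split; [exact HWZ | reflexivity]]. Qed.

Lemma within_range_incl Z Z' s : range_incl Z' Z -> within Z' s -> within Z s.
Proof.
  intros HZ [W [k [HW [HWZ ->]]]]. exists W, k.
  split; [exact HW | split; [eapply range_incl_trans; eauto | reflexivity]].
Qed.

Lemma dependent_choice {A} (Inv : A -> Prop) (R : A -> A -> Prop) x0 :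
  Inv x0 -> (forall x, Inv x -> exists y, Inv y /\ R x y) ->
  exists s : nat -> A, s 0 = x0 /\ forall i, Inv (s i) /\ R (s i) (s (S i)).
Proof.
  intros H0 Hstep.
  assert (Htot : forall x, exists y, Inv x -> Inv y /\ R x y).
  { intro x. destruct (classic (Inv x)) as [Hx|Hx].
    - destruct (Hstep x Hx) as [y Hy]. exists y; auto.
    - exists x; contradiction. }
  destruct (functional_choice _ Htot) as [F HF].
  exists (fun i => Nat.iter i F x0). split; [reflexivity|].
  assert (Hinv : forall i, Inv (Nat.iter i F x0)).
  { induction i; [exact H0|]. apply HF; auto. }
  intro i; split; [apply Hinv|]. apply HF, Hinv.
Qed.

Lemma increasing_subsequence (Q : nat -> Prop) :
  (forall i, exists j, i <= j /\ Q j) -> exists s, increasing s /\ forall k, Q (s k).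
Proof.
  intro HQ. destruct (HQ 0) as [j0 [_ Hj0]].
  destruct (dependent_choice Q lt j0 Hj0) as [s [_ Hs]].
  - intros x _. destruct (HQ (S x)) as [y [Hxy Hy]]. exists y; split; [exact Hy | lia].
  - exists s; split; intro i; apply Hs.
Qed.

Lemma not_acc_descending_chain {A} (R : A -> A -> Prop) x :
  ~ Acc R x -> exists s : nat -> A, s 0 = x /\ forall i, R (s (S i)) (s i).
Proof.
  intro Hx.
  destruct (dependent_choice (fun y => ~ Acc R y) (fun y z => R z y) x Hx) as [s [Hs0 Hs]].
  - intros y Hy. apply NNPP. intro Hno. apply Hy. constructor. intros z Hz.
    apply NNPP. intro Hnz. apply Hno. exists z; auto.
  - exists s; split; [exact Hs0|]. intro i; apply Hs.
Qed.

Lemma sorted_lt_ext (l1 l2 : list nat) :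
  Sorted lt l1 -> Sorted lt l2 -> (forall x, In x l1 <-> In x l2) -> l1 = l2.
Proof.
  intros H1 H2. apply Sorted_StronglySorted in H1, H2; try (intros x y z; lia).
  revert l2 H2. induction H1 as [|a l1 _ IH Ha]; intros l2 H2 Hx;
    destruct H2 as [|b l2 H2 Hb]; rewrite ?Forall_forall in *.
  - reflexivity.
  - destruct (proj2 (Hx b) (or_introl eq_refl)).
  - destruct (proj1 (Hx a) (or_introl eq_refl)).
  - assert (a = b) as <-.
    { destruct (proj1 (Hx a) (or_introl eq_refl)) as [|Ha']; [auto|].
      destruct (proj2 (Hx b) (or_introl eq_refl)) as [|Hb']; [auto|].
      specialize (Ha _ Hb'). specialize (Hb _ Ha'). lia. }
    f_equal. apply IH; [exact H2|]. intro x. split; intro Hin.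
    + destruct (proj1 (Hx x) (or_intror Hin)) as [<-|]; [|assumption].
      specialize (Ha _ Hin). lia.
    + destruct (proj2 (Hx x) (or_intror Hin)) as [<-|]; [|assumption].
      specialize (Hb _ Hin). lia.
Qed.

Lemma max_in_list (s : list nat) :
  s <> [] -> exists m, In m s /\ forall x, In x s -> x <= m.
Proof.
  induction s as [|a s IH]; intros Hs; [congruence|].
  destruct s as [|b s].
  - exists a. split; [left; reflexivity|]. intros x [<-|[]]; lia.
  - destruct IH as [m [Hm Hmax]]; [congruence|].
    destruct (le_lt_dec a m).
    + exists m. split; [right; exact Hm|]. intros x [<-|Hx]; [lia|auto].
    + exists a. split; [left; reflexivity|].
      intros x [<-|Hx]; [lia|]. specialize (Hmax x Hx); lia.
Qed.

Fixpoint sorted_lists_between (a n : nat) : list (list nat) :=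
  match n with
  | 0 => [[]]
  | S n => map (cons a) (sorted_lists_between (S a) n) ++ sorted_lists_between (S a) n
  end.

Lemma in_sorted_lists_between n : forall a s, StronglySorted lt s ->
  (forall x, In x s -> a <= x < a + n) -> In s (sorted_lists_between a n).
Proof.
  induction n as [|n IH]; intros a s Hs Hx.
  - destruct s as [|x s]; [left; reflexivity|].
    specialize (Hx x (or_introl eq_refl)). lia.
  - simpl. apply in_or_app. destruct s as [|x s].
    + right. apply IH; [constructor | intros _ []].
    + inversion Hs as [|? ? Hs' Hf]; subst. rewrite Forall_forall in Hf.
      pose proof (Hx x (or_introl eq_refl)) as Hxa.
      destruct (Nat.eq_dec x a) as [->|Hne].
      * left. apply in_map. apply IH; [exact Hs'|]. intros y Hy.
        specialize (Hf y Hy). specialize (Hx y (or_intror Hy)). lia.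
      * right. apply IH; [exact Hs|]. intros y [<-|Hy]; [lia|].
        specialize (Hf y Hy). specialize (Hx y (or_intror Hy)). lia.
Qed.

Section Barrier.
Variable B : list nat -> Prop.
Hypothesis HB : barrier B.

Definition support (n : nat) : Prop := exists s, B s /\ In n s.

Definition in_support (g : nat -> nat) : Prop := forall i, support (g i).

Lemma barrier_antichain s t : B s -> B t -> incl s t -> s = t.
Proof. apply HB. Qed.

Lemma in_support_range_incl N M : in_support M -> range_incl N M -> in_support N.
Proof. intros HM HNM i. destruct (HNM i) as [j ->]. apply HM. Qed.

Lemma support_unbounded n : exists m, n <= m /\ support m.
Proof.
  apply NNPP. intro Hn. destruct HB as [Hsorted [Hinf _]]. apply Hinf.
  exists (sorted_lists_between 0 n). intros s Bs. apply in_sorted_lists_between.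
  - apply Sorted_StronglySorted; [intros x y z; lia | exact (Hsorted s Bs)].
  - intros x Hx. split; [lia|]. destruct (le_lt_dec n x) as [Hnx|]; [|lia].
    exfalso. apply Hn. exists x. split; [exact Hnx | exists s; auto].
Qed.

Lemma barrier_prefix g : increasing g -> in_support g -> exists k, B (prefix g k).
Proof.
  intros Hg HU. destruct HB as [_ [_ [_ Hbar]]].
  destruct (Hbar (fun n => exists i, g i = n)) as [s [Bs [Hne [Hsort [Hin Hdown]]]]].
  - intro n. exists (g n). split; [apply increasing_ge_id; exact Hg | eauto].
  - intros n [i <-]. apply HU.
  - destruct (max_in_list s Hne) as [m [Hm Hmax]].
    destruct (Hin m Hm) as [K HK].
    exists (S K). replace (prefix g (S K)) with s; [exact Bs|].
    apply sorted_lt_ext; [exact Hsort | apply sorted_prefix; exact Hg|].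
    intro x. rewrite in_prefix. split.
    + intro Hx. destruct (Hin x Hx) as [i <-]. exists i. split; [|reflexivity].
      apply Nat.lt_succ_r. destruct (le_lt_dec i K) as [|HKi]; [assumption|].
      specialize (Hmax _ Hx). pose proof (increasing_lt g Hg K i HKi). lia.
    + intros [i [Hi ->]]. apply (Hdown _ m Hm); [eauto|].
      subst m. apply increasing_le; [exact Hg | lia].
Qed.

Lemma barrier_prefix_unique g a b : B (prefix g a) -> B (prefix g b) -> a = b.
Proof.
  intros Ha Hb. rewrite <- (length_prefix g a), <- (length_prefix g b).
  destruct (le_lt_dec a b) as [Hab|Hba].
  - rewrite (barrier_antichain _ _ Ha Hb (prefix_incl g a b Hab)). reflexivity.
  - rewrite (barrier_antichain _ _ Hb Ha (prefix_incl g b a (Nat.lt_le_incl _ _ Hba))).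
    reflexivity.
Qed.

Lemma shift_rel_prefix V a b : increasing V -> B (prefix V a) -> B (prefix (shift 1 V) b) ->
  shift_rel (prefix V a) (prefix (shift 1 V) b).
Proof.
  intros HV Ha Hb.
  assert (Hab : a <= b).
  { destruct (le_lt_dec a b) as [|Hba]; [assumption|]. exfalso.
    assert (Hincl : incl (prefix (shift 1 V) b) (prefix V a)).
    { intro x. rewrite !in_prefix. intros [i [Hi ->]]. exists (1 + i). split; [lia | reflexivity]. }
    pose proof (f_equal (@length nat) (barrier_antichain _ _ Hb Ha Hincl)) as E.
    rewrite !length_prefix in E. lia. }
  exists (prefix V (S b)). split; [apply sorted_prefix; exact HV|]. split.
  - exists (map V (seq a (S b - a))). split.
    + destruct (S b - a) eqn:E; [lia | discriminate].
    + unfold prefix. rewrite <- map_app, <- seq_app. do 2 f_equal. lia.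
  - rewrite prefix_S. reflexivity.
Qed.

Lemma barrier_shift_pair Z : increasing Z -> in_support Z ->
  exists s t, B s /\ B t /\ within Z s /\ within Z t /\ shift_rel s t.
Proof.
  intros HZ HU. destruct (barrier_prefix Z HZ HU) as [a Ha].
  destruct (barrier_prefix (shift 1 Z) (increasing_shift 1 Z HZ)
              (in_support_range_incl _ _ HU (range_incl_shift 1 Z))) as [b Hb].
  exists (prefix Z a), (prefix (shift 1 Z) b).
  split; [exact Ha | split; [exact Hb | split; [| split]]].
  - apply within_prefix; [exact HZ | apply range_incl_refl].
  - apply within_prefix; [apply increasing_shift; exact HZ | apply range_incl_shift].
  - apply shift_rel_prefix; assumption.
Qed.

End Barrier.

Lemma infinite_pigeonhole (c : nat -> bool) :
  exists s b, increasing s /\ forall k, c (s k) = b.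
Proof.
  destruct (classic (forall i, exists j, i <= j /\ c j = true)) as [Hinf|Hfin].
  - destruct (increasing_subsequence _ Hinf) as [s Hs]. exists s, true; exact Hs.
  - apply not_all_ex_not in Hfin as [i Hi].
    exists (fun k => i + k), false. split; [intro k; lia|].
    intro k. destruct (c (i + k)) eqn:E; [|reflexivity].
    exfalso. apply Hi. exists (i + k); split; [lia | exact E].
Qed.

Section Fusion.
Variable Ms : nat -> nat -> nat.
Hypothesis Ms_increasing : forall i, increasing (Ms i).
Hypothesis Ms_nested : forall i, range_incl (Ms (S i)) (shift 1 (Ms i)).

Definition diagonal (i : nat) : nat := Ms i 0.

Lemma nested_range_incl d i : range_incl (Ms (d + i)) (Ms i).
Proof.
  induction d as [|d IH]; [apply range_incl_refl|].
  eapply range_incl_trans; [apply Ms_nested|].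
  eapply range_incl_trans; [apply range_incl_shift | exact IH].
Qed.

Lemma diagonal_increasing : increasing diagonal.
Proof.
  intro i. unfold diagonal. destruct (Ms_nested i 0) as [j ->]. unfold shift.
  apply increasing_lt; [apply Ms_increasing | lia].
Qed.

Lemma diagonal_in i j : i <= j -> exists m, diagonal j = Ms i m.
Proof.
  intro Hij. destruct (nested_range_incl (j - i) i 0) as [m Hm].
  exists m. unfold diagonal. rewrite <- Hm. f_equal. lia.
Qed.

End Fusion.

Section NashWilliams.
Variable B : list nat -> Prop.
Hypothesis HB : barrier B.
Variable C : list nat -> Prop.

Definition extends_barrier (p : list nat) : Prop := exists q r, B q /\ p = q ++ r.

Definition above (p : list nat) (n : nat) : Prop := forall x, In x p -> x < n.

Definition tree_child (p' p : list nat) : Prop :=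
  exists n, p' = p ++ [n] /\ support B n /\ above p n /\ ~ extends_barrier p.

Definition colored (b : bool) (s : list nat) : Prop := if b then C s else ~ C s.

Definition homogeneous (b : bool) (p : list nat) (N : nat -> nat) : Prop :=
  forall W k, increasing W -> range_incl W N -> B (p ++ prefix W k) ->
  colored b (p ++ prefix W k).

Definition homogeneous_refinement (p : list nat) : Prop :=
  forall M, increasing M -> in_support B M -> above p (M 0) ->
  exists N b, increasing N /\ range_incl N M /\ homogeneous b p N.

Lemma tree_child_acc_nil : Acc tree_child [].
Proof.
  apply NNPP. intro Hn. destruct (not_acc_descending_chain _ _ Hn) as [s [Hs0 Hs]].
  set (g i := nth i (s (S i)) 0).
  assert (Hlen : forall i, length (s i) = i).
  { induction i as [|i IH]; [rewrite Hs0; reflexivity|].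
    destruct (Hs i) as [n [-> _]]. rewrite length_app, IH. simpl. lia. }
  assert (Hstep : forall i, s (S i) = s i ++ [g i] /\ support B (g i) /\
                            above (s i) (g i) /\ ~ extends_barrier (s i)).
  { intro i. destruct (Hs i) as [n [E Hn']].
    replace (g i) with n; [exact (conj E Hn')|].
    unfold g. rewrite E, app_nth2; rewrite Hlen; [|lia]. rewrite Nat.sub_diag. reflexivity. }
  assert (Hpre : forall i, s i = prefix g i).
  { induction i as [|i IH]; [rewrite Hs0; reflexivity|].
    rewrite (proj1 (Hstep i)), IH. unfold prefix. rewrite seq_S, map_app. reflexivity. }
  assert (Hg : increasing g).
  { intro i. apply (Hstep (S i)). rewrite Hpre. apply in_prefix.
    exists i; split; [lia | reflexivity]. }
  destruct (barrier_prefix B HB g Hg (fun i => proj1 (proj2 (Hstep i)))) as [k Hk].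
  apply (Hstep k). exists (s k), []. rewrite app_nil_r, Hpre. split; [exact Hk | reflexivity].
Qed.

Lemma homogeneous_refinement_extends p : extends_barrier p -> homogeneous_refinement p.
Proof.
  intros [q [r [Bq ->]]] M HM _ _.
  assert (Hq : forall W k, B ((q ++ r) ++ prefix W k) -> (q ++ r) ++ prefix W k = q).
  { intros W k Hs. symmetry. apply (barrier_antichain B HB); [exact Bq | exact Hs|].
    intros x Hx. rewrite <- app_assoc. apply in_or_app; left; exact Hx. }
  destruct (classic (C q)) as [Cq|Cq]; [exists M, true | exists M, false];
    (split; [exact HM | split; [apply range_incl_refl|]]);
    intros W k _ _ Hs; rewrite (Hq W k Hs); exact Cq.
Qed.

Lemma homogeneous_fusion_sequence p :
  (forall n, support B n -> above p n -> homogeneous_refinement (p ++ [n])) ->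
  forall M, increasing M -> in_support B M -> above p (M 0) ->
  exists (Ms : nat -> nat -> nat) (bs : nat -> bool), Ms 0 = M /\ forall i,
    increasing (Ms i) /\ range_incl (Ms (S i)) (shift 1 (Ms i)) /\
    homogeneous (bs i) (p ++ [Ms i 0]) (Ms (S i)).
Proof.
  intros IH M HM HU HpM.
  set (Inv X := increasing X /\ in_support B X /\ above p (X 0)).
  set (R (x y : (nat -> nat) * bool) :=
         range_incl (fst y) (shift 1 (fst x)) /\ homogeneous (snd y) (p ++ [fst x 0]) (fst y)).
  destruct (dependent_choice (fun x => Inv (fst x)) R (M, true)) as [s [Hs0 Hs]].
  { split; [exact HM | split; [exact HU | exact HpM]]. }
  { intros [X b0] [HX [HXU HXp]]. simpl in *.
    destruct (IH (X 0) (HXU 0) HXp (shift 1 X)) as [N [b [HN [HNX Hhom]]]].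
    - apply increasing_shift; exact HX.
    - eapply in_support_range_incl; [exact HXU | apply range_incl_shift].
    - intros x Hx. apply in_app_or in Hx as [Hx|[<-|[]]]; unfold shift; simpl.
      + specialize (HXp x Hx). specialize (HX 0). lia.
      + apply HX.
    - exists (N, b). split; [|split; assumption]. split; [exact HN | split].
      + eapply in_support_range_incl; [exact HXU|].
        eapply range_incl_trans; [exact HNX | apply range_incl_shift].
      + intros x Hx. simpl. destruct (HNX 0) as [j ->]. unfold shift.
        specialize (HXp x Hx). pose proof (increasing_le X HX 0 (1 + j)). lia. }
  exists (fun i => fst (s i)), (fun i => snd (s (S i))). split; [rewrite Hs0; reflexivity|].
  intro i. split; [apply (Hs i) | apply (Hs i)].
Qed.

Lemma homogeneous_refinement_step p : ~ extends_barrier p ->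
  (forall n, support B n -> above p n -> homogeneous_refinement (p ++ [n])) ->
  homogeneous_refinement p.
Proof.
  intros Hp IH M HM HU HpM.
  destruct (homogeneous_fusion_sequence p IH M HM HU HpM) as [Ms [bs [HMs0 HMs]]].
  assert (Hnest : forall i, range_incl (Ms (S i)) (shift 1 (Ms i))) by apply HMs.
  pose proof (diagonal_increasing Ms (fun i => proj1 (HMs i)) Hnest) as Hdiag.
  destruct (infinite_pigeonhole bs) as [sg [b [Hsg Hb]]].
  exists (fun k => diagonal Ms (sg k)), b. split; [|split].
  - intro k. apply increasing_lt; [exact Hdiag | apply Hsg].
  - intro k. destruct (diagonal_in Ms Hnest 0 (sg k)) as [m Hm]; [lia|].
    exists m. rewrite Hm, HMs0. reflexivity.
  - intros W [|k] HW HWN HBW.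
    + exfalso. apply Hp. exists p, []. rewrite app_nil_r. split; [|reflexivity].
      change (B (p ++ [])) in HBW. rewrite app_nil_r in HBW. exact HBW.
    + rewrite prefix_S in *.
      change (p ++ W 0 :: prefix (shift 1 W) k) with (p ++ [W 0] ++ prefix (shift 1 W) k) in *.
      rewrite app_assoc in *.
      destruct (HWN 0) as [a Ha]. rewrite Ha in *. rewrite <- (Hb a).
      apply (HMs (sg a)); [apply increasing_shift; exact HW | | exact HBW].
      intro i. destruct (HWN (1 + i)) as [a' Ha']. unfold shift. rewrite Ha'.
      apply (diagonal_in Ms Hnest). apply (increasing_lt_inv _ Hdiag).
      rewrite <- Ha', <- Ha. apply increasing_lt; [exact HW | lia].
Qed.

Lemma homogeneous_refinement_acc p : Acc tree_child p -> homogeneous_refinement p.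
Proof.
  induction 1 as [p _ IH].
  destruct (classic (extends_barrier p)) as [Hp|Hp].
  - apply homogeneous_refinement_extends; exact Hp.
  - apply homogeneous_refinement_step; [exact Hp|].
    intros n Hn Hpn. apply IH. exists n; auto.
Qed.

Theorem nash_williams Z : increasing Z -> in_support B Z ->
  exists Z', increasing Z' /\ range_incl Z' Z /\
    ((forall s, B s -> within Z' s -> C s) \/ (forall s, B s -> within Z' s -> ~ C s)).
Proof.
  intros HZ HU.
  destruct (homogeneous_refinement_acc [] tree_child_acc_nil Z HZ HU) as [N [b [HN [HNZ Hhom]]]].
  { intros x []. }
  exists N. split; [exact HN | split; [exact HNZ|]].
  destruct b; [left | right]; intros s Bs [W [k [HW [HWN ->]]]]; apply (Hhom W k HW HWN Bs).
Qed.

End NashWilliams.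

Lemma nash_williams_cover B (HB : barrier B) {X} (L : list X) (R : X -> list nat -> Prop) Z :
  increasing Z -> in_support B Z ->
  (forall s, B s -> within Z s -> exists x, In x L /\ R x s) ->
  exists Z' x, increasing Z' /\ range_incl Z' Z /\ In x L /\
    forall s, B s -> within Z' s -> R x s.
Proof.
  revert Z. induction L as [|x L IH]; intros Z HZ HU Hcov.
  - destruct (barrier_prefix B HB Z HZ HU) as [k Hk].
    destruct (Hcov (prefix Z k) Hk) as [x [[] _]].
    apply within_prefix; [exact HZ | apply range_incl_refl].
  - destruct (nash_williams B HB (R x) Z HZ HU) as [Z' [HZ' [HZ'Z [Hx|Hnx]]]].
    + exists Z', x.
      split; [exact HZ' | split; [exact HZ'Z | split; [left; reflexivity | exact Hx]]].
    + destruct (IH Z') as [Z'' [y [HZ'' [HZ''Z' [Hy HR]]]]].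
      * exact HZ'.
      * eapply in_support_range_incl; eassumption.
      * intros s Bs Hs. destruct (Hcov s Bs (within_range_incl Z Z' s HZ'Z Hs)) as [y [[<-|Hy] HR]].
        -- destruct (Hnx s Bs Hs HR).
        -- exists y; split; assumption.
      * exists Z'', y. split; [exact HZ'' | split; [eapply range_incl_trans; eassumption|]].
        split; [right; exact Hy | exact HR].
Qed.

Section Wqo.
Variables (P : Type) (le : P -> P -> Prop).
Hypothesis Hpo : is_poset P le.
Hypothesis Hwqo : wqo P le.

Definition downset (D : P -> Prop) : Prop := forall x y, le x y -> D y -> D x.

Definition proper_subdownset (D' D : P -> Prop) : Prop :=
  downset D' /\ (forall x, D' x -> D x) /\ (exists x, D x /\ ~ D' x).

Lemma le_refl x : le x x.
Proof. apply Hpo. Qed.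

Lemma le_trans x y z : le x y -> le y z -> le x z.
Proof. apply Hpo. Qed.

Lemma le_antisym x y : le x y -> le y x -> x = y.
Proof. apply Hpo. Qed.

Lemma downset_minus_up E a : downset E -> E a ->
  proper_subdownset (fun y => E y /\ ~ le a y) E.
Proof.
  intros HE Ea. split; [|split].
  - intros x y Hxy [Ey Hay]. split; [exact (HE x y Hxy Ey)|].
    intro Hax. apply Hay. exact (le_trans a x y Hax Hxy).
  - intros x [Ex _]; exact Ex.
  - exists a. split; [exact Ea|]. intros [_ Haa]. apply Haa, le_refl.
Qed.

Lemma nonprincipal_below_proper D w : downset D -> ~ principal P le D -> D w ->
  proper_subdownset (fun y => D y /\ le y w) D.
Proof.
  intros HD Hnp Dw. split; [|split].
  - intros x y Hxy [Dy Hyw]. split; [exact (HD x y Hxy Dy) | exact (le_trans x y w Hxy Hyw)].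
  - intros x [Dx _]; exact Dx.
  - apply NNPP. intro Hno. apply Hnp. exists w. split; [exact Dw|].
    intros x Dx. apply NNPP. intro Hxw. apply Hno. exists x. split; [exact Dx|].
    intros [_ Hx]; exact (Hxw Hx).
Qed.

Lemma wqo_good_pair (x : nat -> P) : exists i j, i < j /\ le (x i) (x j).
Proof.
  apply NNPP. intro Hn.
  assert (Hbad : forall i j, i < j -> ~ le (x i) (x j)) by (intros i j Hij Hle; apply Hn; eauto).
  destruct Hwqo as [Hwf Hanti].
  set (minimal_after i := forall j, i < j -> ~ strict P le (x j) (x i)).
  destruct (classic (forall i, exists j, i <= j /\ minimal_after j)) as [Hinf|Hfin].
  - destruct (increasing_subsequence _ Hinf) as [sg [Hsg Hmin]].
    apply Hanti. exists (fun k => x (sg k)). intros i j Hij Hle.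
    destruct (Nat.lt_gt_cases i j) as [[Hlt|Hgt] _]; [exact Hij|..].
    + exact (Hbad _ _ (increasing_lt sg Hsg i j Hlt) Hle).
    + apply (Hmin j (sg i)); [exact (increasing_lt sg Hsg j i Hgt)|].
      split; [exact Hle | apply Hbad, (increasing_lt sg Hsg j i Hgt)].
  - apply not_all_ex_not in Hfin as [i0 Hi0].
    assert (Hdesc : forall j, i0 <= j -> exists j', j < j' /\ strict P le (x j') (x j)).
    { intros j Hj. apply NNPP. intro Hno. apply Hi0. exists j. split; [exact Hj|].
      intros j' Hj' Hs. apply Hno. eauto. }
    assert (Hacc : forall y, Acc (strict P le) y -> forall j, i0 <= j -> x j <> y).
    { induction 1 as [y _ IH]. intros j Hj <-. destruct (Hdesc j Hj) as [j' [Hj' Hs]].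
      exact (IH (x j') Hs j' ltac:(lia) eq_refl). }
    exact (Hacc (x i0) (Hwf _) i0 (le_n i0) eq_refl).
Qed.

Lemma proper_subdownset_wf : well_founded proper_subdownset.
Proof.
  intro D. apply NNPP. intro Hn. destruct (not_acc_descending_chain _ _ Hn) as [s [_ Hs]].
  destruct (functional_choice (fun i x => s i x /\ ~ s (S i) x)) as [x Hx].
  { intro i. apply (Hs i). }
  assert (Hdecr : forall d i y, s (d + i) y -> s i y).
  { induction d as [|d IH]; intros i y Hy; [exact Hy|]. apply IH, (Hs (d + i)), Hy. }
  destruct (wqo_good_pair x) as [i [j [Hij Hle]]].
  apply (proj2 (Hx i)). apply ((proj1 (Hs i)) _ _ Hle).
  apply (Hdecr (j - S i)). replace (j - S i + S i) with j by lia. apply Hx.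
Qed.

Lemma downset_ideal_cover E : downset E -> exists L : list (P -> Prop),
  (forall I, In I L -> ideal P le I /\ forall y, I y -> E y) /\
  (forall x, E x -> exists I, In I L /\ I x).
Proof.
  induction E as [E IH] using (well_founded_induction proper_subdownset_wf). intro HE.
  destruct (classic (exists x, E x)) as [Hne|Hempty].
  2:{ exists []. split; [intros I []|]. intros x Ex. destruct (Hempty (ex_intro _ x Ex)). }
  destruct (classic (forall a b, E a -> E b -> exists c, E c /\ le a c /\ le b c)) as [Hdir|Hndir].
  { exists [E]. split.
    - intros I [<-|[]]. split; [split; [exact Hne | split; [exact HE | exact Hdir]] | auto].
    - intros x Ex. exists E. split; [left; reflexivity | exact Ex]. }
  assert (Hab : exists a b, E a /\ E b /\ forall c, E c -> le a c -> le b c -> False).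
  { apply NNPP. intro Hno. apply Hndir. intros a b Ea Eb. apply NNPP. intro Hc.
    apply Hno. exists a, b. split; [exact Ea | split; [exact Eb|]]. eauto. }
  destruct Hab as [a [b [Ea [Eb Hab]]]].
  destruct (IH _ (downset_minus_up E a HE Ea) (proj1 (downset_minus_up E a HE Ea)))
    as [La [HLa HcovA]].
  destruct (IH _ (downset_minus_up E b HE Eb) (proj1 (downset_minus_up E b HE Eb)))
    as [Lb [HLb HcovB]].
  exists (La ++ Lb). split.
  - intros I HI. apply in_app_or in HI as [HI|HI];
      [destruct (HLa I HI) as [HIi HIE] | destruct (HLb I HI) as [HIi HIE]];
      (split; [exact HIi | intros y Iy; apply (HIE y Iy)]).
  - intros x Ex. destruct (classic (le a x)) as [Hax|Hax].
    + destruct (classic (le b x)) as [Hbx|Hbx]; [destruct (Hab x Ex Hax Hbx)|].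
      destruct (HcovB x (conj Ex Hbx)) as [I [HI Ix]].
      exists I. split; [apply in_or_app; right; exact HI | exact Ix].
    + destruct (HcovA x (conj Ex Hax)) as [I [HI Ix]].
      exists I. split; [apply in_or_app; left; exact HI | exact Ix].
Qed.

Lemma ideal_ext I J : ideal P le I -> (forall x, I x <-> J x) -> ideal P le J.
Proof.
  intros [[x Ix] [Hdown Hdir]] E. split; [exists x; apply E, Ix | split].
  - intros a b Hab Jb. apply E. apply (Hdown a b Hab), E, Jb.
  - intros a b Ja Jb. destruct (Hdir a b (proj2 (E a) Ja) (proj2 (E b) Jb)) as [c [Ic Hc]].
    exists c. split; [apply E, Ic | exact Hc].
Qed.

Lemma ideal_point_outside_list D (L : list (P -> Prop)) : ideal P le D ->
  exists z, D z /\ forall J, In J L -> ideal P le J -> (exists x, D x /\ ~ J x) -> ~ J z.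
Proof.
  intros [[x0 Dx0] [Hdown Hdir]]. induction L as [|J L IH].
  - exists x0. split; [exact Dx0 | intros J []].
  - destruct IH as [z [Dz Hz]].
    destruct (classic (ideal P le J /\ exists x, D x /\ ~ J x)) as [[HJ [x [Dx nJx]]]|HJ].
    + destruct (Hdir z x Dz Dx) as [u [Du [Hzu Hxu]]]. exists u. split; [exact Du|].
      intros J' [<-|HJ'] HJ'i Hex Ju.
      * exact (nJx (proj1 (proj2 HJ) x u Hxu Ju)).
      * exact (Hz J' HJ' HJ'i Hex (proj1 (proj2 HJ'i) z u Hzu Ju)).
    + exists z. split; [exact Dz|]. intros J' [<-|HJ'] HJ'i Hex.
      * destruct (HJ (conj HJ'i Hex)).
      * exact (Hz J' HJ' HJ'i Hex).
Qed.

End Wqo.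

Section ListedIdeals.
Variables (P : Type) (le : P -> P -> Prop).
Hypothesis Hpo : is_poset P le.
Hypothesis Hwqo : wqo P le.
Variable l : list (P -> Prop).
Hypothesis Hl : forall I, ideal P le I -> ~ principal P le I ->
  exists J, In J l /\ forall x, I x <-> J x.

Definition listed_below (D : P -> Prop) (y : P) : Prop :=
  exists J, In J l /\ ideal P le J /\ (forall x, J x -> D x) /\ (exists x, D x /\ ~ J x) /\ J y.

Lemma listed_below_proper D : ideal P le D -> proper_subdownset P le (listed_below D) D.
Proof.
  intro HD. split; [|split].
  - intros x y Hxy [J [HJl [HJ [HJD [Hout Jy]]]]].
    exists J. split; [exact HJl | split; [exact HJ | split; [exact HJD | split; [exact Hout|]]]].
    exact (proj1 (proj2 HJ) x y Hxy Jy).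
  - intros x [J [_ [_ [HJD [_ Jx]]]]]. exact (HJD x Jx).
  - destruct (ideal_point_outside_list P le D l HD) as [z [Dz Hz]].
    exists z. split; [exact Dz|]. intros [J [HJl [HJ [_ [Hout Jz]]]]].
    exact (Hz J HJl HJ Hout Jz).
Qed.

Lemma ideals_off_up_bounded D z : ideal P le D -> D z ->
  forall L : list (P -> Prop),
  (forall I, In I L -> ideal P le I /\ forall y, I y -> D y /\ ~ le z y) ->
  exists w, D w /\ forall I, In I L -> forall y, I y -> listed_below D y \/ le y w.
Proof.
  intros HD Dz L. induction L as [|I L IH]; intros HL.
  { exists z. split; [exact Dz | intros I []]. }
  destruct IH as [w [Dw Hw]]; [intros I' HI'; apply HL; right; exact HI'|].
  destruct (HL I (or_introl eq_refl)) as [HI HIE].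
  destruct (classic (principal P le I)) as [[m [Im Hm]]|Hnp].
  - destruct (proj2 (proj2 HD) w m Dw (proj1 (HIE m Im))) as [c [Dc [Hwc Hmc]]].
    exists c. split; [exact Dc|]. intros I' [<-|HI'] y Iy.
    + right. exact (le_trans P le Hpo _ _ _ (Hm y Iy) Hmc).
    + destruct (Hw I' HI' y Iy) as [Hy|Hy]; [left; exact Hy|].
      right. exact (le_trans P le Hpo _ _ _ Hy Hwc).
  - destruct (Hl I HI Hnp) as [J [HJl HIJ]].
    exists w. split; [exact Dw|]. intros I' [<-|HI'] y Iy; [|exact (Hw I' HI' y Iy)].
    left. exists J. split; [exact HJl | split; [exact (ideal_ext P le I J HI HIJ)|]].
    split; [intros x Jx; exact (proj1 (HIE x (proj2 (HIJ x) Jx)))|].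
    split; [|exact (proj1 (HIJ y) Iy)].
    exists z. split; [exact Dz|]. intro Jz.
    exact (proj2 (HIE z (proj2 (HIJ z) Jz)) (le_refl P le Hpo z)).
Qed.

Lemma ideal_off_up_bounded D z : ideal P le D -> D z ->
  exists w, D w /\ forall y, D y -> ~ le z y -> listed_below D y \/ le y w.
Proof.
  intros HD Dz.
  destruct (downset_ideal_cover P le Hpo Hwqo (fun y => D y /\ ~ le z y)) as [L [HL Hcov]].
  { exact (proj1 (downset_minus_up P le Hpo D z (proj1 (proj2 HD)) Dz)). }
  destruct (ideals_off_up_bounded D z HD Dz L HL) as [w [Dw Hw]].
  exists w. split; [exact Dw|]. intros y Dy Hzy.
  destruct (Hcov y (conj Dy Hzy)) as [I [HI Iy]]. exact (Hw I HI y Iy).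
Qed.

End ListedIdeals.

Definition graft (k : nat) (A W : nat -> nat) : nat -> nat :=
  fun i => if i <? k then A i else W (i - k).

Lemma graft_increasing k A W : increasing A -> increasing W -> range_incl W (shift k A) ->
  increasing (graft k A W).
Proof.
  intros HA HW HWA i. unfold graft.
  destruct (Nat.ltb_spec i k); destruct (Nat.ltb_spec (S i) k); [apply HA | | lia |].
  - replace (S i - k) with 0 by lia. destruct (HWA 0) as [j ->]. unfold shift.
    apply increasing_lt; [exact HA | lia].
  - replace (S i - k) with (S (i - k)) by lia. apply HW.
Qed.

Lemma graft_range_incl k A W : range_incl W (shift k A) -> range_incl (graft k A W) A.
Proof.
  intros HWA i. unfold graft. destruct (i <? k); [exists i; reflexivity|].
  destruct (HWA (i - k)) as [j ->]. exists (k + j). reflexivity.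
Qed.

Lemma prefix_graft k A W : prefix (graft k A W) k = prefix A k.
Proof.
  apply map_ext_in. intros i Hi. apply in_seq in Hi. unfold graft.
  destruct (Nat.ltb_spec i k); [reflexivity | lia].
Qed.

Lemma prefix_shift_graft k A W a : prefix (shift k (graft k A W)) a = prefix W a.
Proof.
  apply prefix_ext. intro i. unfold shift, graft.
  destruct (Nat.ltb_spec (k + i) k); [lia|]. f_equal. lia.
Qed.

Section BadMap.
Variables (P : Type) (le : P -> P -> Prop).
Hypothesis Hpo : is_poset P le.
Hypothesis Hwqo : wqo P le.
Variable l : list (P -> Prop).
Hypothesis Hl : forall I, ideal P le I -> ~ principal P le I ->
  exists J, In J l /\ forall x, I x <-> J x.
Variable B : list nat -> Prop.
Hypothesis HB : barrier B.
Variable f : list nat -> P.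
Hypothesis f_bad : ~ good_map le B f.

Definition confined (Z : nat -> nat) (D : P -> Prop) : Prop :=
  forall s, B s -> within Z s -> D (f s).

Definition unconfined (D : P -> Prop) : Prop :=
  forall Z, increasing Z -> in_support B Z -> ~ confined Z D.

(* The bounds [w_j] do not depend on [V]: [w_(j+1)] comes from [w_j] by
   [ideal_off_up_bounded], since badness keeps the next value off the up-set
   of [w_j]. *)
Lemma chain_bounded D Z k0 : ideal P le D -> increasing Z -> in_support B Z ->
  confined Z D -> confined Z (fun y => ~ listed_below P le l D y) -> B (prefix Z k0) ->
  forall j, exists w, D w /\ forall V, increasing V -> range_incl V Z ->
    prefix V k0 = prefix Z k0 ->
    forall a, B (prefix (shift j V) a) -> le (f (prefix (shift j V) a)) w.
Proof.
  intros HD HZ HU HconfD Hfree Hk0 j. induction j as [|j [w [Dw Hw]]].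
  - exists (f (prefix Z k0)). split.
    { apply HconfD; [exact Hk0 | apply within_prefix; [exact HZ | apply range_incl_refl]]. }
    intros V HV HVZ HVk0 a Ha.
    change (B (prefix V a)) in Ha. change (le (f (prefix V a)) (f (prefix Z k0))).
    rewrite <- HVk0 in Hk0 |- *. rewrite (barrier_prefix_unique B HB V a k0 Ha Hk0).
    apply (le_refl P le Hpo).
  - destruct (ideal_off_up_bounded P le Hpo Hwqo l Hl D w HD Dw) as [w' [Dw' Hw']].
    exists w'. split; [exact Dw'|]. intros V HV HVZ HVk0 a' Ha'.
    assert (HX : increasing (shift j V)) by (apply increasing_shift; exact HV).
    assert (HXZ : range_incl (shift j V) Z)
      by (eapply range_incl_trans; [apply range_incl_shift | exact HVZ]).
    destruct (barrier_prefix B HB _ HX (in_support_range_incl B _ _ HU HXZ)) as [a Ha].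
    rewrite <- prefix_shift_S in Ha' |- *.
    assert (Hy : within Z (prefix (shift 1 (shift j V)) a')).
    { apply within_prefix; [apply increasing_shift; exact HX|].
      eapply range_incl_trans; [apply range_incl_shift | exact HXZ]. }
    assert (Hnot_above : ~ le w (f (prefix (shift 1 (shift j V)) a'))).
    { intro Hwy. apply f_bad. exists (prefix (shift j V) a), (prefix (shift 1 (shift j V)) a').
      split; [exact Ha | split; [exact Ha' | split; [apply (shift_rel_prefix B HB); assumption|]]].
      exact (le_trans P le Hpo _ _ _ (Hw V HV HVZ HVk0 a Ha) Hwy). }
    destruct (Hw' _ (HconfD _ Ha' Hy) Hnot_above) as [Hlisted|Hle];
      [destruct (Hfree _ Ha' Hy Hlisted) | exact Hle].
Qed.

Section InductionStep.
Variable D : P -> Prop.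
Hypothesis D_down : downset P le D.
Hypothesis IH : forall D', proper_subdownset P le D' D -> unconfined D'.

Lemma confined_ideal Z : increasing Z -> in_support B Z -> confined Z D -> ideal P le D.
Proof.
  intros HZ HU Hconf.
  destruct (downset_ideal_cover P le Hpo Hwqo D D_down) as [L [HL Hcov]].
  destruct (nash_williams_cover B HB L (fun I s => I (f s)) Z HZ HU)
    as [Z1 [I [HZ1 [HZ1Z [HIL HI]]]]].
  { intros s Bs Hs. exact (Hcov _ (Hconf s Bs Hs)). }
  destruct (HL I HIL) as [HIi HID].
  assert (HDI : forall x, D x -> I x).
  { intros x Dx. apply NNPP. intro nIx.
    apply (IH I (conj (proj1 (proj2 HIi)) (conj HID (ex_intro _ x (conj Dx nIx)))) Z1 HZ1).
    - eapply in_support_range_incl; eassumption.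
    - exact HI. }
  apply (ideal_ext P le I D HIi). intro x. split; [apply HID | apply HDI].
Qed.

Lemma principal_unconfined : principal P le D -> unconfined D.
Proof.
  intros [m [Dm Hm]] Z HZ HU Hconf.
  destruct (nash_williams B HB (fun s => f s = m) Z HZ HU) as [Z' [HZ' [HZ'Z [Heq|Hneq]]]].
  - destruct (barrier_shift_pair B HB Z' HZ' (in_support_range_incl B _ _ HU HZ'Z))
      as [s [t [Bs [Bt [Hs [Ht Hst]]]]]].
    apply f_bad. exists s, t. split; [exact Bs | split; [exact Bt | split; [exact Hst|]]].
    rewrite (Heq s Bs Hs), (Heq t Bt Ht). apply (le_refl P le Hpo).
  - apply (IH _ (downset_minus_up P le Hpo D m D_down Dm) Z' HZ'
             (in_support_range_incl B _ _ HU HZ'Z)).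
    intros s Bs Hs. assert (Dfs : D (f s)) by exact (Hconf s Bs (within_range_incl Z Z' s HZ'Z Hs)).
    split; [exact Dfs|]. intro Hmfs.
    exact (Hneq s Bs Hs (le_antisym P le Hpo _ _ (Hm _ Dfs) Hmfs)).
Qed.

Lemma nonprincipal_unconfined : ideal P le D -> ~ principal P le D -> unconfined D.
Proof.
  intros HD Hnp Z HZ HU Hconf.
  destruct (nash_williams B HB (fun s => listed_below P le l D (f s)) Z HZ HU)
    as [Z' [HZ' [HZ'Z [Hlisted|Hfree]]]].
  { apply (IH _ (listed_below_proper P le l D HD) Z');
      [exact HZ' | exact (in_support_range_incl B _ _ HU HZ'Z) | exact Hlisted]. }
  assert (HU' : in_support B Z') by exact (in_support_range_incl B _ _ HU HZ'Z).
  assert (HconfD : confined Z' D)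
    by (intros s Bs Hs; exact (Hconf s Bs (within_range_incl Z Z' s HZ'Z Hs))).
  destruct (barrier_prefix B HB Z' HZ' HU') as [k0 Hk0].
  destruct (chain_bounded D Z' k0 HD HZ' HU' HconfD Hfree Hk0 k0) as [w [Dw Hw]].
  apply (IH _ (nonprincipal_below_proper P le Hpo D w D_down Hnp Dw)
           (shift k0 Z') (increasing_shift k0 Z' HZ')
           (in_support_range_incl B _ _ HU' (range_incl_shift k0 Z'))).
  intros s Bs [W [a [HW [HWZ ->]]]]. split.
  - apply HconfD; [exact Bs | apply within_prefix; [exact HW|]].
    eapply range_incl_trans; [exact HWZ | apply range_incl_shift].
  - rewrite <- (prefix_shift_graft k0 Z' W a). rewrite <- (prefix_shift_graft k0 Z' W a) in Bs.
    apply Hw; [exact (graft_increasing k0 Z' W HZ' HW HWZ) | exact (graft_range_incl k0 Z' W HWZ)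
              | apply prefix_graft | exact Bs].
Qed.

End InductionStep.

Lemma downset_unconfined D : downset P le D -> unconfined D.
Proof.
  induction D as [D IH] using (well_founded_induction (proper_subdownset_wf P le Hwqo)).
  intros HD Z HZ HU Hconf.
  assert (IH' : forall D', proper_subdownset P le D' D -> unconfined D')
    by (intros D' HD'; exact (IH D' HD' (proj1 HD'))).
  pose proof (confined_ideal D HD IH' Z HZ HU Hconf) as Hideal.
  destruct (classic (principal P le D)) as [Hp|Hnp].
  - exact (principal_unconfined D HD IH' Hp Z HZ HU Hconf).
  - exact (nonprincipal_unconfined D HD IH' Hideal Hnp Z HZ HU Hconf).
Qed.

End BadMap.

Theorem corollary1p3 (P : Type) (le : P -> P -> Prop) :
  is_poset P le ->
  wqo P le ->
  finitely_many_nonprincipal_ideals P le ->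
  bqo le.
Proof.
  intros Hpo Hwqo [l Hl] A ltA _ B HB _ f.
  apply NNPP. intro f_bad.
  destruct (increasing_subsequence (support B) (support_unbounded B HB)) as [Z [HZ HU]].
  apply (downset_unconfined P le Hpo Hwqo l Hl B HB f f_bad (fun _ => True)) with Z.
  - intros x y _ _. exact I.
  - exact HZ.
  - exact HU.
  - intros s _ _. exact I.
Qed.
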